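(* Let $\mathcal{M}:R\to A_2B_2$ be a quantum channel with $B_2$ classical such that for every register $R'$ and every state $\omega_{RR'}$, $\rho_{A_2B_2R'}=\mathcal{M}(\omega_{RR'})$ satisfies $\rho_{B_2R'}=\rho_{B_2}\otimes\omega_{R'}$. Let $\omega_{A_1B_1R}$ be a state and $\rho_{A_1B_1A_2B_2}=\mathcal{M}(\omega_{A_1B_1R})$. Let $\nu_{A_1B_1A_2B_2}$ be any state with $\nu_{A_2B_2|A_1B_1}=\rho_{A_2B_2|A_1B_1}$ and $\mathrm{supp}(\nu_{A_1B_1})=\mathrm{supp}(\rho_{A_1B_1})$. Then there exists a state $\omega'_{A_1B_1R}$ with $\mathcal{M}(\omega'_{A_1B_1R})=\nu_{A_1B_1A_2B_2}$.
   Context: All spaces finite-dimensional. For a state $\rho_{XY}$, the conditional operator is $\rho_{X|Y}=\rho_Y^{-1/2}\rho_{XY}\rho_Y^{-1/2}$, with the inverse taken on the support of $\rho_Y$. Channels act as the identity on systems they do not act on. *)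

From HB Require Import structures.
From mathcomp Require Import all_boot all_order all_algebra.
From mathcomp Require Import mxtens.
Set Implicit Arguments.
Unset Strict Implicit.
Unset Printing Implicit Defensive.
Import Order.TTheory GRing.Theory Num.Theory.
Local Open Scope ring_scope.

Section Quantum.
Variable C : numClosedFieldType.

(* index of the basis vector |i> (x) |j> of C^m (x) C^n in C^(m*n) *)
Definition tidx m n (i : 'I_m) (j : 'I_n) : 'I_(m * n) := mxtens_index (i, j).
Definition fst_idx m n (k : 'I_(m * n)) : 'I_m := (mxtens_unindex k).1.
Definition snd_idx m n (k : 'I_(m * n)) : 'I_n := (mxtens_unindex k).2.

Definition adjmx m n (A : 'M[C]_(m, n)) : 'M[C]_(n, m) := map_mx Num.conj (A^T).

Definition psdmx n (A : 'M[C]_n) : Prop :=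
  adjmx A = A /\ forall v : 'rV[C]_n, 0 <= (v *m A *m adjmx v) 0 0.

Definition density n (A : 'M[C]_n) : Prop := psdmx A /\ \tr A = 1.

Definition ptrace1 m n (A : 'M[C]_(m * n)) : 'M[C]_n :=
  \matrix_(i, j) \sum_(k < m) A (tidx k i) (tidx k j).
Definition ptrace2 m n (A : 'M[C]_(m * n)) : 'M[C]_m :=
  \matrix_(i, j) \sum_(k < n) A (tidx i k) (tidx j k).
Definition ptrace_mid m k n (A : 'M[C]_(m * (k * n))) : 'M[C]_(m * n) :=
  \matrix_(p, q) \sum_(l < k)
     A (tidx (fst_idx p) (tidx l (snd_idx p)))
       (tidx (fst_idx q) (tidx l (snd_idx q))).

(* (id_k (x) Phi) for a map Phi : L(C^r) -> L(C^s), defined blockwise *)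
Definition blockmx k r (X : 'M[C]_(k * r)) (i j : 'I_k) : 'M[C]_r :=
  \matrix_(x, y) X (tidx i x) (tidx j y).
Definition idtens k r s (Phi : 'M[C]_r -> 'M[C]_s) (X : 'M[C]_(k * r))
  : 'M[C]_(k * s) :=
  \matrix_(p, q) Phi (blockmx X (fst_idx p) (fst_idx q)) (snd_idx p) (snd_idx q).

Definition channel r s (Phi : 'M[C]_r -> 'M[C]_s) : Prop :=
  [/\ (forall (a : C) (X Y : 'M[C]_r), Phi (a *: X + Y) = a *: Phi X + Phi Y),
      (forall k (X : 'M[C]_(k * r)), psdmx X -> psdmx (@idtens k r s Phi X)) &
      (forall X, \tr (Phi X) = \tr X)].

(* an operator on C^m (x) C^n is classical on the second factor: block
   diagonal w.r.t. the computational basis of the second factor *)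
Definition classical_snd m n (A : 'M[C]_(m * n)) : Prop :=
  forall (i j : 'I_m) (b b' : 'I_n), b != b' -> A (tidx i b) (tidx j b') = 0.

(* inverse square root of a PSD matrix, taken on its support *)
Definition inv_sqrt_supp n (Y : 'M[C]_n) : 'M[C]_n :=
  let P := spectralmx Y in
  let d := spectral_diag Y in
  invmx P *m diag_mx (\row_i (if d 0 i == 0 then 0 else (sqrtC (d 0 i))^-1)) *m P.

(* conditional operator rho_{X|Y} for rho_{YX} on C^m (x) C^n (Y first) *)
Definition cond_op m n (rho : 'M[C]_(m * n)) : 'M[C]_(m * n) :=
  let S := inv_sqrt_supp (ptrace2 rho) in
  (S *t (1%:M : 'M[C]_n)) *m rho *m (S *t (1%:M : 'M[C]_n)).

(* support (= range / column space) equality *)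
Definition same_supp n (A B : 'M[C]_n) : Prop := (A^T :=: B^T)%MS.

End Quantum.

From HB Require Import structures.
From mathcomp Require Import all_boot all_order all_algebra.
From mathcomp Require Import mxtens.
Import Order.TTheory GRing.Theory Num.Theory.
Local Open Scope ring_scope.

(* Write rho_A, nu_A for the A1B1 marginals and take
   om' = (K ⊗ 1) om (K ⊗ 1)^† with K = nu_A^(1/2) rho_A^(-1/2).  Since M acts
   only on R, M(om') = (K ⊗ 1) rho (K ⊗ 1)^†
   = (nu_A^(1/2) ⊗ 1) rho_(A2B2|A1B1) (nu_A^(1/2) ⊗ 1), which by hypothesis is
   (nu_A^(1/2) ⊗ 1) nu_(A2B2|A1B1) (nu_A^(1/2) ⊗ 1) = (P ⊗ 1) nu (P ⊗ 1) with
   P the projector onto supp nu_A.  This is nu itself: tr (nu ((1 - P) ⊗ 1)) =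
   tr (nu_A (1 - P)) = 0, and a positive operator with zero trace against a
   projector is annihilated by it.  om' is positive as a congruence of om, and
   tr om' = tr M(om') = tr nu = 1. *)

Set Implicit Arguments.
Unset Strict Implicit.
Unset Printing Implicit Defensive.

Section Quantum.
Variable C : numClosedFieldType.

Lemma fst_tidx m n (i : 'I_m) (j : 'I_n) : fst_idx (tidx i j) = i.
Proof. by rewrite /fst_idx /tidx mxtens_indexK. Qed.

Lemma snd_tidx m n (i : 'I_m) (j : 'I_n) : snd_idx (tidx i j) = j.
Proof. by rewrite /snd_idx /tidx mxtens_indexK. Qed.

Lemma big_tidx m n (F : 'I_(m * n) -> C) :
  \sum_k F k = \sum_i \sum_j F (tidx i j).
Proof.
rewrite pair_big (reindex (@mxtens_index m n)); last first.
  by exists (@mxtens_unindex m n) => k _; rewrite ?mxtens_indexK ?mxtens_unindexK.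
by apply: eq_bigr => -[i j].
Qed.

Lemma tensmx1_mul k n (A B : 'M[C]_k) :
  (A *t (1%:M : 'M[C]_n)) *m (B *t 1%:M) = (A *m B) *t 1%:M.
Proof. by rewrite tensmx_mul mulmx1. Qed.

Lemma mul_tensmx1E k n p (K : 'M[C]_k) (X : 'M[C]_(k * n, p)) i x q :
  ((K *t 1%:M) *m X) (tidx i x) q = \sum_j K i j * X (tidx j x) q.
Proof.
rewrite mxE big_tidx; apply: eq_bigr => j _.
rewrite (bigD1 x) //= big1 => [|y /negbTE neq_yx]; rewrite tensmxE mxE.
  by rewrite eqxx mulr1n mulr1 addr0.
by rewrite eq_sym neq_yx mulr0n mulr0 mul0r.
Qed.

Lemma mulmx_tensmx1E k n p (L : 'M[C]_k) (X : 'M[C]_(p, k * n)) q j y :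
  (X *m (L *t 1%:M)) q (tidx j y) = \sum_i L i j * X q (tidx i y).
Proof.
rewrite mxE big_tidx; apply: eq_bigr => i _.
rewrite (bigD1 y) //= big1 => [|z /negbTE neq_zy]; rewrite tensmxE mxE.
  by rewrite eqxx mulr1n mulr1 addr0 mulrC.
by rewrite neq_zy mulr0n mulr0 mulr0.
Qed.

Lemma mxtrace_ptrace2 m n (A : 'M[C]_(m * n)) : \tr (ptrace2 A) = \tr A.
Proof. by rewrite /mxtrace big_tidx; apply: eq_bigr => i _; rewrite mxE. Qed.

Lemma mxtrace_mul_tensmx1 k n (X : 'M[C]_(k * n)) (Q : 'M[C]_k) :
  \tr (X *m (Q *t 1%:M)) = \tr (ptrace2 X *m Q).
Proof.
rewrite /mxtrace big_tidx; apply: eq_bigr => i _.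
under eq_bigr => x _ do rewrite mulmx_tensmx1E.
rewrite exchange_big mxE; apply: eq_bigr => l _.
by rewrite mxE mulr_suml; apply: eq_bigr => x _; rewrite mulrC.
Qed.

Lemma adjmxE m n (A : 'M[C]_(m, n)) i j : adjmx A i j = (A j i)^*.
Proof. by rewrite !mxE. Qed.

Lemma adjmxK m n (A : 'M[C]_(m, n)) : adjmx (adjmx A) = A.
Proof. exact: trmxCK. Qed.

Lemma adjmxM m n p (A : 'M[C]_(m, n)) (B : 'M[C]_(n, p)) :
  adjmx (A *m B) = adjmx B *m adjmx A.
Proof. by rewrite /adjmx trmx_mul map_mxM. Qed.

Lemma adjmxB m n (A B : 'M[C]_(m, n)) : adjmx (A - B) = adjmx A - adjmx B.
Proof. by apply/matrixP => i j; rewrite !mxE rmorphB. Qed.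

Lemma adjmx1 n : adjmx (1%:M : 'M[C]_n) = 1%:M.
Proof. by rewrite /adjmx trmx1 map_mx1. Qed.

Lemma adjmxT m n p q (A : 'M[C]_(m, n)) (B : 'M[C]_(p, q)) :
  adjmx (A *t B) = adjmx A *t adjmx B.
Proof. by rewrite /adjmx trmx_tens map_mxT. Qed.

Lemma adjmx_delta m n (i : 'I_m) (j : 'I_n) :
  adjmx (delta_mx i j : 'M[C]_(m, n)) = delta_mx j i.
Proof. by apply/matrixP => x y; rewrite !mxE conjC_nat andbC. Qed.

Lemma adjmx_rowsub m m' n (f : 'I_m' -> 'I_m) (A : 'M[C]_(m, n)) :
  adjmx (rowsub f A) = colsub f (adjmx A).
Proof. by apply/matrixP => i j; rewrite !mxE. Qed.

Lemma mxtrace_mul_adj_eq0 m n (X : 'M[C]_(m, n)) :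
  \tr (X *m adjmx X) = 0 -> X = 0.
Proof.
have diagE i : (X *m adjmx X) i i = \sum_j X i j * (X i j)^*.
  by rewrite mxE; apply: eq_bigr => j _; rewrite adjmxE.
have diag_ge0 i : 0 <= (X *m adjmx X) i i.
  by rewrite diagE; apply: sumr_ge0 => j _; apply: mul_conjC_ge0.
move=> /psumr_eq0P tr0; apply/matrixP => i j; rewrite mxE.
have /psumr_eq0P row0 : \sum_j X i j * (X i j)^* = 0 by rewrite -diagE tr0.
by apply/eqP; rewrite -mul_conjC_eq0 row0 // => l _; apply: mul_conjC_ge0.
Qed.

Lemma psdmx_conj m n (A : 'M[C]_m) (B : 'M[C]_(n, m)) :
  psdmx A -> psdmx (B *m A *m adjmx B).
Proof.
move=> [herA formA]; split; first by rewrite !adjmxM adjmxK herA mulmxA.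
by move=> v; have := formA (v *m B); rewrite adjmxM !mulmxA.
Qed.

Lemma psdmx_diag_ge0 m (A : 'M[C]_m) i : psdmx A -> 0 <= A i i.
Proof.
move=> [_ formA]; have := formA (delta_mx 0 i).
by rewrite adjmx_delta -rowE -colE !mxE.
Qed.

Lemma psdmx_sum m (I : finType) (F : I -> 'M[C]_m) :
  (forall l, psdmx (F l)) -> psdmx (\sum_l F l).
Proof.
move=> psdF; split.
  apply/matrixP => i j; rewrite adjmxE !summxE rmorph_sum.
  by apply: eq_bigr => l _; rewrite -[in RHS](psdF l).1 adjmxE.
move=> v; rewrite mulmx_sumr mulmx_suml summxE.
by apply: sumr_ge0 => l _; apply: (psdF l).2.
Qed.

Lemma ptrace2_sum_conj m n (A : 'M[C]_(m * n)) :
  ptrace2 A = \sum_l rowsub (fun i : 'I_m => tidx i l) 1%:M *m A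
                        *m adjmx (rowsub (fun i : 'I_m => tidx i l) 1%:M).
Proof.
apply/matrixP => i j; rewrite summxE mxE; apply: eq_bigr => l _.
by rewrite mul_rowsub_mx mul1mx adjmx_rowsub adjmx1 mulmx_colsub mulmx1 !mxE.
Qed.

Lemma psdmx_ptrace2 m n (A : 'M[C]_(m * n)) : psdmx A -> psdmx (ptrace2 A).
Proof.
by move=> psdA; rewrite ptrace2_sum_conj; apply: psdmx_sum => l; apply: psdmx_conj.
Qed.

Section SpectralFunction.
Variables (n : nat) (A : 'M[C]_n).
Local Notation U := (spectralmx A).
Local Notation d := (spectral_diag A).

(* f(A), meaningful only for normal A, where A = adjmx U *m diag_mx d *m U. *)
Definition spectral_fun (f : C -> C) : 'M[C]_n :=
  adjmx U *m diag_mx (\row_i f (d 0 i)) *m U.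

Lemma mul_spectralmx_adj : U *m adjmx U = 1%:M.
Proof. exact/unitarymxP/spectral_unitarymx. Qed.

Lemma eq_spectral_fun f g :
  (forall i, f (d 0 i) = g (d 0 i)) -> spectral_fun f = spectral_fun g.
Proof.
move=> efg; rewrite /spectral_fun; congr (_ *m diag_mx _ *m _).
by apply/rowP => i; rewrite !mxE efg.
Qed.

Lemma spectral_funM f g :
  spectral_fun f *m spectral_fun g = spectral_fun (fun x => f x * g x).
Proof.
rewrite /spectral_fun -!mulmxA (mulmxA U) mul_spectralmx_adj mul1mx.
rewrite (mulmxA (diag_mx _)) mulmx_diag !mulmxA.
by congr (_ *m diag_mx _ *m _); apply/rowP => i; rewrite !mxE.
Qed.

Lemma spectral_fun_adj f :
  adjmx (spectral_fun f) = spectral_fun (fun x => (f x)^*).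
Proof.
rewrite /spectral_fun !adjmxM adjmxK mulmxA; congr (_ *m _ *m _).
by rewrite /adjmx tr_diag_mx map_diag_mx; congr diag_mx; apply/rowP => i; rewrite !mxE.
Qed.

Lemma spectral_fun_id : adjmx A = A -> spectral_fun id = A.
Proof.
move=> herA; have normalA : A \is normalmx.
  by apply/normalmxP; move: herA; rewrite /adjmx => ->.
rewrite [RHS](orthomx_spectralP normalA) (invmx_unitary (spectral_unitarymx A)).
by congr (_ *m diag_mx _ *m _); apply/rowP => i; rewrite mxE.
Qed.

Lemma spectral_diag_ge0 i : psdmx A -> 0 <= d 0 i.
Proof.
move=> psdA; have := psdmx_diag_ge0 i (psdmx_conj U psdA).
rewrite -{2}(spectral_fun_id psdA.1) /spectral_fun !mulmxA mul_spectralmx_adj.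
by rewrite mul1mx -mulmxA mul_spectralmx_adj mulmx1 !mxE eqxx mulr1n.
Qed.

Lemma spectral_fun_herm f : psdmx A -> (forall x, 0 <= x -> 0 <= f x) ->
  adjmx (spectral_fun f) = spectral_fun f.
Proof.
move=> psdA f_ge0; rewrite spectral_fun_adj; apply: eq_spectral_fun => i.
by rewrite geC0_conj // f_ge0 // spectral_diag_ge0.
Qed.

Lemma psdmx_sqrt : psdmx A -> exists2 S, adjmx S = S & S *m S = A.
Proof.
move=> psdA; exists (spectral_fun sqrtC).
  by apply: spectral_fun_herm => // x; rewrite sqrtC_ge0.
rewrite spectral_funM -[RHS](spectral_fun_id psdA.1).
by apply: eq_spectral_fun => i; rewrite -expr2 sqrtCK.
Qed.

End SpectralFunction.

(* With A = S *m S and S Hermitian, tr (A Q) is the squared Frobenius norm of S Q. *)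
Lemma psdmx_mul_proj_eq0 m (A Q : 'M[C]_m) : psdmx A ->
  adjmx Q = Q -> Q *m Q = Q -> \tr (A *m Q) = 0 -> A *m Q = 0.
Proof.
move=> psdA herQ idemQ trAQ; have [S herS SS] := psdmx_sqrt psdA.
suff SQ0 : S *m Q = 0 by rewrite -SS -mulmxA SQ0 mulmx0.
apply: mxtrace_mul_adj_eq0.
by rewrite adjmxM herS herQ mulmxA -(mulmxA S) idemQ mxtrace_mulC mulmxA SS.
Qed.

Lemma psdmx_proj_fix m (A X : 'M[C]_m) : psdmx A ->
  adjmx X = X -> X *m X = X -> \tr (A *m X) = \tr A -> X *m A *m X = A.
Proof.
move=> psdA herX idemX trAX.
have AX : A *m X = A.
  suff : A *m (1%:M - X) = 0 by rewrite mulmxBr mulmx1 => /subr0_eq/esym.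
  apply: psdmx_mul_proj_eq0 => //.
  - by rewrite adjmxB adjmx1 herX.
  - by rewrite mulmxBl mul1mx mulmxBr mulmx1 idemX subrr subr0.
  - by rewrite mulmxBr mulmx1 raddfB /= trAX subrr.
have XA : X *m A = A by rewrite -herX -{1}psdA.1 -adjmxM AX psdA.1.
by rewrite XA AX.
Qed.

Definition inv_sqrtC (x : C) : C := if x == 0 then 0 else (sqrtC x)^-1.

Lemma inv_sqrtC_ge0 x : 0 <= x -> 0 <= inv_sqrtC x.
Proof.
by move=> x_ge0; rewrite /inv_sqrtC; case: eqP => // _; rewrite invr_ge0 sqrtC_ge0.
Qed.

Lemma sqrtC_mul_inv_sqrtC x : sqrtC x * inv_sqrtC x = (x != 0)%:R.
Proof.
by rewrite /inv_sqrtC; case: eqP => [_|/eqP x_neq0]; rewrite ?mulr0 ?mulfV ?sqrtC_eq0.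
Qed.

Lemma inv_sqrt_suppE n (Y : 'M[C]_n) : inv_sqrt_supp Y = spectral_fun Y inv_sqrtC.
Proof. by rewrite /inv_sqrt_supp invmx_unitary ?spectral_unitarymx. Qed.

Definition supp_proj n (Y : 'M[C]_n) : 'M[C]_n :=
  spectral_fun Y (fun x => (x != 0)%:R).

Lemma supp_proj_herm n (Y : 'M[C]_n) : adjmx (supp_proj Y) = supp_proj Y.
Proof. by rewrite spectral_fun_adj; apply: eq_spectral_fun => i; rewrite conjC_nat. Qed.

Lemma supp_proj_idem n (Y : 'M[C]_n) : supp_proj Y *m supp_proj Y = supp_proj Y.
Proof.
by rewrite spectral_funM; apply: eq_spectral_fun => i; rewrite -natrM mulnb andbb.
Qed.

Lemma mulmx_supp_proj n (Y : 'M[C]_n) : adjmx Y = Y -> Y *m supp_proj Y = Y.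
Proof.
move=> herY; rewrite -{1 3}(spectral_fun_id herY) spectral_funM.
by apply: eq_spectral_fun => i; case: eqP => [->|]; rewrite ?mulr0 ?mulr1.
Qed.

Lemma supp_proj_tensmx1_conj k n (nu : 'M[C]_(k * n)) : psdmx nu ->
  supp_proj (ptrace2 nu) *t 1%:M *m nu *m (supp_proj (ptrace2 nu) *t 1%:M) = nu.
Proof.
move=> psd_nu; apply: psdmx_proj_fix => //.
- by rewrite adjmxT supp_proj_herm adjmx1.
- by rewrite tensmx1_mul supp_proj_idem.
- rewrite mxtrace_mul_tensmx1 mulmx_supp_proj ?mxtrace_ptrace2 //.
  exact: (psdmx_ptrace2 psd_nu).1.
Qed.

Lemma cond_opK k n (nu : 'M[C]_(k * n)) : psdmx nu ->
  spectral_fun (ptrace2 nu) sqrtC *t 1%:M *m cond_op nu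
    *m (spectral_fun (ptrace2 nu) sqrtC *t 1%:M) = nu.
Proof.
move=> psd_nu; rewrite /cond_op inv_sqrt_suppE.
set Y := ptrace2 nu; set SqY := spectral_fun Y sqrtC; set ISqY := spectral_fun Y _.
have SqY_ISqY : SqY *m ISqY = supp_proj Y.
  by rewrite spectral_funM; apply: eq_spectral_fun => i; rewrite sqrtC_mul_inv_sqrtC.
have ISqY_SqY : ISqY *m SqY = supp_proj Y.
  rewrite spectral_funM; apply: eq_spectral_fun => i.
  by rewrite mulrC sqrtC_mul_inv_sqrtC.
rewrite !mulmxA tensmx1_mul SqY_ISqY -mulmxA tensmx1_mul ISqY_SqY.
exact: supp_proj_tensmx1_conj.
Qed.

Section IdentityTensorChannel.
Variables (r s : nat) (M : 'M[C]_r -> 'M[C]_s).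

Lemma idtens_tr k (X : 'M[C]_(k * r)) :
  (forall Z, \tr (M Z) = \tr Z) -> \tr (idtens M X) = \tr X.
Proof.
move=> trM; rewrite /mxtrace !big_tidx; apply: eq_bigr => i _.
transitivity (\tr (M (blockmx X i i))).
  by apply: eq_bigr => x _; rewrite !mxE !fst_tidx !snd_tidx.
by rewrite trM; apply: eq_bigr => x _; rewrite mxE.
Qed.

Hypothesis linM : linear M.
HB.instance Definition _ := GRing.isLinear.Build C 'M[C]_r 'M[C]_s *:%R M linM.

Lemma blockmx_mul_tensmx1 k (K L : 'M[C]_k) (X : 'M[C]_(k * r)) i j :
  blockmx ((K *t 1%:M) *m X *m (L *t 1%:M)) i j =
  \sum_l \sum_k' (L l j * K i k') *: blockmx X k' l.
Proof.
apply/matrixP => x y; rewrite mxE mulmx_tensmx1E summxE.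
apply: eq_bigr => l _; rewrite mul_tensmx1E summxE mulr_sumr.
by apply: eq_bigr => k' _; rewrite !mxE mulrA.
Qed.

Lemma idtens_mul_tensmx1 k (K L : 'M[C]_k) (X : 'M[C]_(k * r)) :
  idtens M ((K *t 1%:M) *m X *m (L *t 1%:M)) =
  (K *t 1%:M) *m idtens M X *m (L *t 1%:M).
Proof.
apply/matrixP => p q.
case: (mxtens_indexP p) => i x; case: (mxtens_indexP q) => j y.
rewrite -[mxtens_index (i, x)]/(tidx i x) -[mxtens_index (j, y)]/(tidx j y).
rewrite mulmx_tensmx1E [LHS]mxE !fst_tidx !snd_tidx blockmx_mul_tensmx1.
rewrite linear_sum summxE; apply: eq_bigr => l _.
rewrite linear_sum summxE mul_tensmx1E mulr_sumr; apply: eq_bigr => k' _.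
by rewrite linearZ !mxE !fst_tidx !snd_tidx mulrA.
Qed.

End IdentityTensorChannel.

End Quantum.

Theorem claimB4 (C : numClosedFieldType) (r a1 b1 a2 b2 : nat)
  (M : 'M[C]_r -> 'M[C]_(a2 * b2)) :
  channel M ->
  (forall X : 'M[C]_r, density X -> classical_snd (M X)) ->
  (forall (r' : nat) (om : 'M[C]_(r' * r)), density om ->
     let rho := idtens M om in
     ptrace_mid rho = ptrace2 om *t ptrace1 (ptrace1 rho)) ->
  forall (om : 'M[C]_((a1 * b1) * r)), density om ->
  let rho := idtens M om in
  forall (nu : 'M[C]_((a1 * b1) * (a2 * b2))), density nu ->
  cond_op nu = cond_op rho ->
  same_supp (ptrace2 nu) (ptrace2 rho) ->
  exists om' : 'M[C]_((a1 * b1) * r), density om' /\ idtens M om' = nu.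
Proof.
move=> [linM cpM trM] _ _ om om_density rho nu nu_density cond_eq _.
have psd_rho : psdmx rho := cpM _ om om_density.1.
set S := inv_sqrt_supp (ptrace2 rho); set R := spectral_fun (ptrace2 nu) sqrtC.
have herS : adjmx S = S.
  rewrite /S inv_sqrt_suppE; apply: spectral_fun_herm (psdmx_ptrace2 psd_rho) _.
  exact: inv_sqrtC_ge0.
have herR : adjmx R = R.
  by apply: spectral_fun_herm (psdmx_ptrace2 nu_density.1) _ => x; rewrite sqrtC_ge0.
pose K := (R *m S) *t (1%:M : 'M[C]_r).
have M_om' : idtens M (K *m om *m adjmx K) = nu.
  rewrite adjmxT adjmx1 adjmxM herS herR (idtens_mul_tensmx1 linM) -/rho.
  rewrite -[RHS](cond_opK nu_density.1) cond_eq /cond_op -/S -!tensmx1_mul.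
  by rewrite !mulmxA.
exists (K *m om *m adjmx K); split => //; split; first exact: psdmx_conj om_density.1.
by rewrite -(idtens_tr _ trM) M_om' nu_density.2.
Qed.
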